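(* Let $H$ be a finite-dimensional complex Hilbert space, $A$ a unital (real or complex) $*$-subalgebra of $\mathrm{End}_{\mathbb{C}}(H)$, $D$ a selfadjoint operator on $H$, and $J$ an antilinear isometry of $H$ with $J^2=\varepsilon 1$, $JD=\varepsilon' DJ$ for some $\varepsilon,\varepsilon'\in\{\pm1\}$, such that $[a,JbJ^{-1}]=0$ for all $a,b\in A$. With $D_0$ and $D_2$ as defined in the context, $D_0+D_2\in\Omega^1_D(A)$.
   Context: Let $A_{\mathbb{C}}$ be the complex $*$-subalgebra of $\mathrm{End}_{\mathbb{C}}(H)$ generated by $A$; write $A_{\mathbb{C}}\cong\bigoplus_{i=1}^N M_{n_i}(\mathbb{C})$ and let $P_1,\dots,P_N$ be the (orthogonal projections representing the) units of the summands, so $\sum_iP_i=1$. Set $Q_j=JP_jJ^{-1}$ and $D_{ij,kl}=P_iQ_jDP_kQ_l$. Define $D_0=\sum_{i,j,k:\,i\neq k}D_{ij,kj}$, $D_1=\sum_{i,j,l:\,j\neq l}D_{ij,il}$, $D_2=\sum_{i,j,k,l:\,i\neq k,\,j\neq l}D_{ij,kl}$, $D_R=\sum_{i,j}D_{ij,ij}$, so $D=D_0+D_1+D_2+D_R$. $\Omega^1_D(A)$ is the complex linear span in $\mathrm{End}_{\mathbb{C}}(H)$ of the operators $a[D,b]$, $a,b\in A$. *)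

(* H = C^n (column vectors) with the standard inner product,
   End_C(H) = 'M[C]_n, C = R[i] the complex numbers over a real field R. *)
From HB Require Import structures.
From mathcomp Require Import all_boot all_order all_algebra.
From mathcomp Require Import complex reals.
Set Implicit Arguments.
Unset Strict Implicit.
Unset Printing Implicit Defensive.
Import Order.TTheory GRing.Theory Num.Theory.
Local Open Scope ring_scope.

Section Defs.
Variables (C : numClosedFieldType) (n : nat).

Definition adjmx (X : 'M[C]_n) : 'M[C]_n := map_mx Num.conj X^T.

Definition cdot (x y : 'cV[C]_n) : C := \sum_(r < n) Num.conj (x r 0) * y r 0.

Definition opmx (f : 'cV[C]_n -> 'cV[C]_n) : 'M[C]_n :=
  \matrix_(r, c) f (delta_mx c 0) r 0.

Definition comm (X Y : 'M[C]_n) : 'M[C]_n := X *m Y - Y *m X.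

Definition cspan (S : 'M[C]_n -> Prop) (X : 'M[C]_n) : Prop :=
  exists (k : nat) (c : 'I_k -> C) (a : 'I_k -> 'M[C]_n),
    (forall m, S (a m)) /\ X = \sum_(m < k) c m *: a m.

(* unital real *-subalgebra of End_C(H) (complex ones are in particular real) *)
Definition real_star_unital_subalg (A : 'M[C]_n -> Prop) : Prop :=
  [/\ A 1%:M,
      (forall a b, A a -> A b -> A (a + b)),
      (forall (t : C) a, t \is Num.real -> A a -> A (t *: a)),
      (forall a b, A a -> A b -> A (a *m b)) &
      (forall a, A a -> A (adjmx a))].

Definition complex_star_subalg (B : 'M[C]_n -> Prop) : Prop :=
  [/\ B 0,
      (forall a b, B a -> B b -> B (a + b)),
      (forall (t : C) a, B a -> B (t *: a)),
      (forall a b, B a -> B b -> B (a *m b)) &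
      (forall a, B a -> B (adjmx a))].

(* A_C : the complex *-subalgebra generated by A (smallest one containing A) *)
Definition gen_complex_star_alg (A : 'M[C]_n -> Prop) (X : 'M[C]_n) : Prop :=
  forall B, complex_star_subalg B -> (forall a, A a -> B a) -> B X.

Definition central_proj (B : 'M[C]_n -> Prop) (P : 'M[C]_n) : Prop :=
  [/\ B P, P *m P = P, adjmx P = P & forall X, B X -> P *m X = X *m P].

(* minimal nonzero central projection of B; for B = A_C ~ (+)_i M_{n_i}(C)
   these are exactly the units P_i of the simple summands *)
Definition min_central_proj (B : 'M[C]_n -> Prop) (P : 'M[C]_n) : Prop :=
  [/\ central_proj B P, P != 0 &
      forall P', central_proj B P' -> P' *m P = P' -> P' = 0 \/ P' = P].

Definition Omega1 (A : 'M[C]_n -> Prop) (D : 'M[C]_n) : 'M[C]_n -> Prop :=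
  cspan (fun X => exists a b, [/\ A a, A b & X = a *m comm D b]).

Variables (J Jinv : 'cV[C]_n -> 'cV[C]_n).

Definition Jconj (X : 'M[C]_n) : 'M[C]_n := opmx (fun x => J (X *m Jinv x)).

Variables (N : nat) (P : 'I_N -> 'M[C]_n) (D : 'M[C]_n).

Definition Qp (j : 'I_N) : 'M[C]_n := Jconj (P j).

Definition Dc (i j k l : 'I_N) : 'M[C]_n := P i *m Qp j *m D *m P k *m Qp l.

Definition D0 : 'M[C]_n :=
  \sum_(i < N) \sum_(j < N) \sum_(k < N | i != k) Dc i j k j.

Definition D2 : 'M[C]_n :=
  \sum_(i < N) \sum_(j < N) \sum_(k < N) \sum_(l < N | (i != k) && (j != l))
    Dc i j k l.

End Defs.

From HB Require Import structures.
From mathcomp Require Import all_boot all_order all_algebra.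
From mathcomp Require Import complex reals.

Set Implicit Arguments.
Unset Strict Implicit.
Unset Printing Implicit Defensive.
Import Order.TTheory GRing.Theory Num.Theory.
Local Open Scope ring_scope.

(* Because the Q_j = J P_j J^-1 also sum to 1, summing out the Q-indices gives
   D_0 + D_2 = sum_(i <> k) P_i D P_k = sum_k (1 - P_k) [D, P_k].  The algebra
   A_C is the complex span of A, and Omega^1_D(A) contains a [D, b] for all a, b
   in that span; since 1 is in A, each (1 - P_k) [D, P_k] lies in Omega^1_D(A). *)

Lemma additive_morph0 (U V : zmodType) (f : U -> V) :
  {morph f : x y / x + y} -> f 0 = 0.
Proof. by move=> fD; apply: (addrI (f 0)); rewrite -fD !addr0. Qed.

Section ComplexSpan.
Variables (C : numClosedFieldType) (n : nat).
Implicit Types (A S T U : 'M[C]_n -> Prop) (X Y : 'M[C]_n).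

Lemma cspan0 S : cspan S 0.
Proof.
by exists 0%N, (fun _ => 0), (fun _ => 0); split; [case | rewrite big_ord0].
Qed.

Lemma mem_cspan S X : S X -> cspan S X.
Proof.
by move=> SX; exists 1%N, (fun _ => 1), (fun _ => X); rewrite big_ord1 scale1r.
Qed.

Lemma cspanD S X Y : cspan S X -> cspan S Y -> cspan S (X + Y).
Proof.
move=> [k1 [c1 [a1 [Sa1 ->]]]] [k2 [c2 [a2 [Sa2 ->]]]].
exists (k1 + k2)%N,
  (fun m => match split m with inl p => c1 p | inr p => c2 p end),
  (fun m => match split m with inl p => a1 p | inr p => a2 p end).
split; first by move=> m; case: (split m).
rewrite big_split_ord; congr (_ + _); apply: eq_bigr => m _.
  by rewrite -[lshift _ _]/(unsplit (inl _ m)) unsplitK.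
by rewrite -[rshift _ _]/(unsplit (inr _ m)) unsplitK.
Qed.

Lemma cspanZ S t X : cspan S X -> cspan S (t *: X).
Proof.
move=> [k [c [a [Sa ->]]]]; exists k, (fun m => t * c m), a; split => //.
by rewrite scaler_sumr; apply: eq_bigr => m _; rewrite scalerA.
Qed.

Lemma cspanB S X Y : cspan S X -> cspan S Y -> cspan S (X - Y).
Proof. by move=> SX SY; rewrite -scaleN1r; apply/cspanD/cspanZ. Qed.

Lemma cspan_sum S k (F : 'I_k -> 'M[C]_n) :
  (forall m, cspan S (F m)) -> cspan S (\sum_(m < k) F m).
Proof.
by move=> SF; elim/big_rec: _ => [|m X _]; [exact: cspan0 | apply: cspanD].
Qed.

Lemma cspan_semilinear S T (f : 'M[C]_n -> 'M[C]_n) (g : C -> C) :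
  {morph f : x y / x + y} -> (forall t x, f (t *: x) = g t *: f x) ->
  (forall a, S a -> cspan T (f a)) -> forall X, cspan S X -> cspan T (f X).
Proof.
move=> fD fZ fS X [k [c [a [Sa ->]]]].
rewrite (big_morph f fD (additive_morph0 fD)); apply: cspan_sum => m.
by rewrite fZ; apply/cspanZ/fS.
Qed.

Lemma cspan_bilinear S T U (h : 'M[C]_n -> 'M[C]_n -> 'M[C]_n) :
  (forall y, {morph h^~ y : x1 x2 / x1 + x2}) ->
  (forall t x y, h (t *: x) y = t *: h x y) ->
  (forall x, {morph h x : y1 y2 / y1 + y2}) ->
  (forall t x y, h x (t *: y) = t *: h x y) ->
  (forall a b, S a -> T b -> U (h a b)) ->
  forall X Y, cspan S X -> cspan T Y -> cspan U (h X Y).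
Proof.
move=> hDl hZl hDr hZr hST X Y SX TY.
apply: (cspan_semilinear (f := h^~ Y) (g := id) (hDl Y)) SX => // a Sa.
apply: (cspan_semilinear (f := h a) (g := id) (hDr a)) TY => // b Tb.
exact/mem_cspan/hST.
Qed.

Lemma adjmxD X Y : adjmx (X + Y) = adjmx X + adjmx Y.
Proof. by apply/matrixP => r s; rewrite !mxE rmorphD. Qed.

Lemma adjmxZ t X : adjmx (t *: X) = Num.conj t *: adjmx X.
Proof. by apply/matrixP => r s; rewrite !mxE rmorphM. Qed.

Lemma complex_star_subalg_cspan A :
  real_star_unital_subalg A -> complex_star_subalg (cspan A).
Proof.
case=> _ _ _ AM Aadj; split.
- exact: cspan0.
- exact: cspanD.
- by move=> t X; apply: cspanZ.
- apply: cspan_bilinear AM => [Y X1 X2|t X Y|X Y1 Y2|t X Y].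
  + exact: mulmxDl.
  + by rewrite scalemxAl.
  + exact: mulmxDr.
  + by rewrite scalemxAr.
- apply: (cspan_semilinear (g := Num.conj)) => [X Y|t X|a Aa].
  + exact: adjmxD.
  + exact: adjmxZ.
  + exact/mem_cspan/Aadj.
Qed.

Lemma gen_complex_star_alg_cspan A X :
  real_star_unital_subalg A -> gen_complex_star_alg A X -> cspan A X.
Proof.
by move=> hA; apply; [exact: complex_star_subalg_cspan | exact: mem_cspan].
Qed.

Lemma commDr X Y1 Y2 : comm X (Y1 + Y2) = comm X Y1 + comm X Y2.
Proof. by rewrite /comm mulmxDr mulmxDl opprD addrACA. Qed.

Lemma commZr t X Y : comm X (t *: Y) = t *: comm X Y.
Proof. by rewrite /comm -scalemxAr -scalemxAl scalerBr. Qed.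

Lemma Omega1_mul_comm A D X Y :
  cspan A X -> cspan A Y -> Omega1 A D (X *m comm D Y).
Proof.
apply: (cspan_bilinear (h := fun a b => a *m comm D b))
  => [Y' X1 X2|t X' Y'|X' Y1 Y2|t X' Y'|a b Aa Ab].
- exact: mulmxDl.
- by rewrite scalemxAl.
- by rewrite commDr mulmxDr.
- by rewrite commZr scalemxAr.
- by exists a, b.
Qed.

End ComplexSpan.

Section OffDiagonal.
Variables (C : numClosedFieldType) (n N : nat).
Variables (P : 'I_N -> 'M[C]_n) (D : 'M[C]_n).
Hypotheses (P_idem : forall k, P k *m P k = P k) (P_sum : \sum_k P k = 1%:M).

Lemma sum_offdiag_comm :
  \sum_i \sum_(k | i != k) P i *m D *m P k
  = \sum_k (1%:M - P k) *m comm D (P k).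
Proof.
rewrite (exchange_big_dep xpredT) //=; apply: eq_bigr => k _.
have -> : \sum_(i | i != k) P i *m D *m P k = (1%:M - P k) *m D *m P k.
  by rewrite -!mulmx_suml -P_sum [in RHS](bigD1 k) //= addrAC subrr add0r.
have compl_P : (1%:M - P k) *m P k = 0 by rewrite mulmxBl mul1mx P_idem subrr.
by rewrite /comm mulmxBr !mulmxA compl_P mul0mx subr0.
Qed.

End OffDiagonal.

Section JConjugation.
Variables (C : numClosedFieldType) (n N : nat).
Variables (J Jinv : 'cV[C]_n -> 'cV[C]_n).
Variables (P : 'I_N -> 'M[C]_n) (D : 'M[C]_n).
Hypothesis J_add : {morph J : x y / x + y}.

Lemma Jconj_add : {morph Jconj J Jinv : X Y / X + Y}.
Proof.
by move=> X Y; apply/matrixP => r c; rewrite !mxE mulmxDl J_add !mxE.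
Qed.

Lemma Jconj1 : cancel Jinv J -> Jconj J Jinv 1%:M = 1%:M.
Proof.
by move=> JK; apply/matrixP => r c; rewrite !mxE mul1mx JK !mxE eqxx andbT.
Qed.

Lemma sum_Qp :
  cancel Jinv J -> \sum_k P k = 1%:M -> \sum_j Qp J Jinv P j = 1%:M.
Proof.
move=> JK P_sum; rewrite -(Jconj1 JK) -P_sum.
by rewrite (big_morph _ Jconj_add (additive_morph0 Jconj_add)).
Qed.

Hypothesis Q_sum : \sum_j Qp J Jinv P j = 1%:M.

Lemma sum_Dc_jl i k : \sum_j \sum_l Dc J Jinv P D i j k l = P i *m D *m P k.
Proof.
under eq_bigr do rewrite -mulmx_sumr Q_sum mulmx1.
by rewrite -!mulmx_suml -mulmx_sumr Q_sum mulmx1.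
Qed.

Lemma D0_add_D2 :
  D0 J Jinv P D + D2 J Jinv P D = \sum_i \sum_(k | i != k) P i *m D *m P k.
Proof.
have -> : D2 J Jinv P D =
    \sum_i \sum_j \sum_(k | i != k) \sum_(l | j != l) Dc J Jinv P D i j k l.
  rewrite /D2; apply: eq_bigr => i _; apply: eq_bigr => j _.
  rewrite [RHS]big_mkcond; apply: eq_bigr => k _.
  by case: (i != k); rewrite ?big_pred0_eq.
rewrite /D0 -big_split; apply: eq_bigr => i _.
under [in RHS]eq_bigr do rewrite -sum_Dc_jl.
rewrite -big_split [RHS]exchange_big; apply: eq_bigr => j _.
rewrite -big_split; apply: eq_bigr => k _ /=.
rewrite [RHS](bigD1 j) //=; congr (_ + _).
by apply: eq_bigl => l; rewrite eq_sym.
Qed.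

End JConjugation.

Theorem lemma6 (R : realType) (n : nat)
    (A : 'M[R[i]]_n -> Prop) (D : 'M[R[i]]_n)
    (J Jinv : 'cV[R[i]]_n -> 'cV[R[i]]_n) (eps eps' : R[i])
    (N : nat) (P : 'I_N -> 'M[R[i]]_n) :
  real_star_unital_subalg A ->
  adjmx D = D ->
  (* J : antilinear isometry of H, with inverse Jinv *)
  (forall x y, J (x + y) = J x + J y) ->
  (forall (c : R[i]) x, J (c *: x) = Num.conj c *: J x) ->
  (forall x, cdot (J x) (J x) = cdot x x) ->
  cancel J Jinv -> cancel Jinv J ->
  (eps = 1 \/ eps = -1) -> (eps' = 1 \/ eps' = -1) ->
  (forall x, J (J x) = eps *: x) ->
  (forall x, J (D *m x) = eps' *: (D *m J x)) ->
  (forall a b, A a -> A b -> comm a (Jconj J Jinv b) = 0) ->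
  (* P_1, ..., P_N : the units of the simple summands of A_C *)
  (forall i, min_central_proj (gen_complex_star_alg A) (P i)) ->
  \sum_(i < N) P i = 1%:M ->
  Omega1 A D (D0 J Jinv P D + D2 J Jinv P D).
Proof.
move=> hA _ J_add _ _ _ JK _ _ _ _ _ P_central P_sum.
have P_cspan k : cspan A (P k).
  by have [[/(gen_complex_star_alg_cspan hA)]] := P_central k.
have P_idem k : P k *m P k = P k by have [[]] := P_central k.
rewrite D0_add_D2; last exact: sum_Qp.
rewrite sum_offdiag_comm //.
apply: cspan_sum => k; apply: Omega1_mul_comm (P_cspan k).
by apply: cspanB (P_cspan k); apply: mem_cspan; case: hA.
Qed.
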